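(* Let $(E,\mathcal{P})$ be a random locally convex module over $K$ with base $(\Omega,\mathcal{F},P)$, where $(\Omega,\mathcal{F},P)$ is nonatomic. If $f:E\to L^0(\mathcal F,K)$ is a module homomorphism that is continuous from $(E,\mathcal{T}_{\varepsilon,\lambda})$ to $(L^{0}(\mathcal{F},K),\mathcal{T}_{c})$ (i.e. $f\in E^\ast_{min}$), then $f(x)=0$ for all $x\in E$.
   Context: $(\Omega,\mathcal{F},P)$ is a probability space, $K=\mathbb{R}$ or $\mathbb{C}$, and $L^{0}(\mathcal{F},K)$ is the algebra of equivalence classes (modulo a.s. equality) of $K$-valued measurable random variables. $L^0(\mathcal F,\mathbb R)$ is ordered by $\xi\le\eta$ iff $\xi^0\le\eta^0$ a.s.; $L^{0}_{+}=\{\xi\ge 0\}$, $L^{0}_{++}=\{\xi: \xi>0 \text{ a.s. on }\Omega\}$. An $L^0$-seminorm on a left $L^0(\mathcal F,K)$-module $E$ is a map $\|\cdot\|:E\to L^0_+$ with $\|x+y\|\le\|x\|+\|y\|$ and $\|\xi x\|=|\xi|\,\|x\|$ for all $\xi\in L^0(\mathcal F,K)$. A random locally convex module $(E,\mathcal P)$ is a left $L^0(\mathcal F,K)$-module $E$ with a family $\mathcal P$ of $L^0$-seminorms such that $\bigvee\{\|x\|:\|\cdot\|\in\mathcal P\}=0$ implies $x=0$. For finite $\mathcal Q\subset\mathcal P$, $\|x\|_{\mathcal Q}=\bigvee_{\|\cdot\|\in\mathcal Q}\|x\|$. The $(\varepsilon,\lambda)$-topology $\mathcal T_{\varepsilon,\lambda}$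 on $E$ has local base at $0$ the sets $\{x: P\{\omega:\|x\|_{\mathcal Q}(\omega)<\varepsilon\}>1-\lambda\}$, $\mathcal Q$ finite, $\varepsilon>0$, $0<\lambda<1$. The locally $L^0$-convex topology $\mathcal T_c$: $G$ is open iff for every $x\in G$ there are finite $\mathcal Q\subset\mathcal P$ and $\varepsilon\in L^0_{++}$ with $x+\{y:\|y\|_{\mathcal Q}\le\varepsilon\}\subset G$. $L^0(\mathcal F,K)$ is regarded as a random locally convex module with $\mathcal P=\{|\cdot|\}$. A probability space is nonatomic if it has no atom, where an atom is $A\in\mathcal F$ with $P(A)>0$ such that every measurable $B\subset A$ has $P(B)=0$ or $P(A\setminus B)=0$. *)

From HB Require Import structures.
From mathcomp Require Import all_boot all_order all_algebra.
From mathcomp Require Import all_classical all_reals all_analysis.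
From mathcomp Require Import complex.
From Stdlib Require List.

Set Implicit Arguments.
Unset Strict Implicit.
Unset Printing Implicit Defensive.

Import Order.TTheory GRing.Theory Num.Theory.
Local Open Scope classical_set_scope.
Local Open Scope ring_scope.

Inductive scalarK := KReal | KComplex.

Definition Kt (R : realType) (k : scalarK) : numFieldType :=
  match k with KReal => (R : numFieldType) | KComplex => (R[i] : numFieldType) end.

Definition Knorm (R : realType) (k : scalarK) : Kt R k -> R :=
  match k return Kt R k -> R with
  | KReal => fun x => `|x|
  | KComplex => fun z => complex.Re (`|z| : R[i])
  end.

Section Defs.
Context (R : realType) (d : measure_display) (T : measurableType d)
        (P : probability T R) (k : scalarK).

Local Notation K := (Kt R k).

Definition Kmeas : (T -> K) -> Prop :=
  match k return (T -> Kt R k) -> Prop with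
  | KReal => fun xi => measurable_fun setT xi
  | KComplex => fun xi => measurable_fun setT (fun w => complex.Re (xi w : R[i])) /\
                           measurable_fun setT (fun w => complex.Im (xi w : R[i]))
  end.

(* Elements of L^0(F,K) are represented by measurable functions T -> K,
   everything being understood modulo P-a.s. equality. *)

Definition L0_module (E : zmodType) (act : (T -> K) -> E -> E) : Prop :=
  [/\ (forall xi x y, Kmeas xi -> act xi (x + y) = act xi x + act xi y),
      (forall xi eta x, Kmeas xi -> Kmeas eta ->
          act (fun w => xi w + eta w) x = act xi x + act eta x),
      (forall xi eta x, Kmeas xi -> Kmeas eta ->
          act (fun w => xi w * eta w) x = act xi (act eta x)),
      (forall x, act (fun _ => 1) x = x) &
      (forall xi eta x, Kmeas xi -> Kmeas eta ->
          {ae P, forall w, xi w = eta w} -> act xi x = act eta x)].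

Definition L0_seminorm (E : zmodType) (act : (T -> K) -> E -> E)
    (p : E -> T -> R) : Prop :=
  [/\ (forall x, measurable_fun setT (p x)),
      (forall x, {ae P, forall w, 0 <= p x w}),
      (forall x y, {ae P, forall w, p (x + y) w <= p x w + p y w}) &
      (forall xi x, Kmeas xi ->
          {ae P, forall w, p (act xi x) w = Knorm (xi w) * p x w})].

Definition L0_sup (F : set (T -> R)) (xi : T -> R) : Prop :=
  (forall eta, F eta -> {ae P, forall w, eta w <= xi w}) /\
  (forall zeta, measurable_fun setT zeta ->
      (forall eta, F eta -> {ae P, forall w, eta w <= zeta w}) ->
      {ae P, forall w, xi w <= zeta w}).

Definition RLC_module (E : zmodType) (act : (T -> K) -> E -> E)
    (Pfam : set (E -> T -> R)) : Prop :=
  [/\ L0_module act,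
      (forall p, Pfam p -> L0_seminorm act p) &
      (forall x, L0_sup [set p x | p in Pfam] (fun _ => 0) -> x = 0)].

Definition normQ (E : zmodType) (Q : seq (E -> T -> R)) (x : E) (w : T) : R :=
  \big[Num.max/0]_(p <- Q) p x w.

Definition eps_lambda_open (E : zmodType) (Pfam : set (E -> T -> R))
    (G : set E) : Prop :=
  forall x, G x -> exists (Q : seq (E -> T -> R)) (eps lam : R),
    [/\ Q <> [::], (forall p, List.In p Q -> Pfam p),
        0 < eps, 0 < lam < 1 &
        forall y, ((1 - lam)%:E < P [set w | (normQ Q y w < eps)%R])%E ->
          G (x + y)].

Definition Tc_open_L0 (G : set (T -> K)) : Prop :=
  forall xi, G xi -> Kmeas xi /\
    exists eps : T -> R,
      [/\ measurable_fun setT eps, {ae P, forall w, 0 < eps w} &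
          forall eta, Kmeas eta -> {ae P, forall w, Knorm (eta w) <= eps w} ->
            G (fun w => xi w + eta w)].

Definition L0_module_hom (E : zmodType) (act : (T -> K) -> E -> E)
    (f : E -> T -> K) : Prop :=
  [/\ (forall x, Kmeas (f x)),
      (forall x y, {ae P, forall w, f (x + y) w = f x w + f y w}) &
      (forall xi x, Kmeas xi -> {ae P, forall w, f (act xi x) w = xi w * f x w})].

Definition cont_epslam_Tc (E : zmodType) (Pfam : set (E -> T -> R))
    (f : E -> T -> K) : Prop :=
  forall G, Tc_open_L0 G -> eps_lambda_open Pfam (f @^-1` G).

End Defs.

Definition nonatomic (R : realType) (d : measure_display) (T : measurableType d)
    (P : probability T R) : Prop :=
  ~ exists A : set T, [/\ measurable A, (0 < P A)%E &
      forall B, measurable B -> B `<=` A -> P B = 0%E \/ P (A `\` B) = 0%E].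

From HB Require Import structures.
From mathcomp Require Import all_boot all_order all_algebra.
From mathcomp Require Import all_classical all_reals all_analysis.
From mathcomp Require Import complex measurable_realfun lra.

Set Implicit Arguments.
Unset Strict Implicit.
Unset Printing Implicit Defensive.
Import Order.TTheory GRing.Theory Num.Theory.
Local Open Scope classical_set_scope.
Local Open Scope ring_scope.

(* The open unit ball of L^infty is T_c-open, so continuity makes f essentially
   bounded by some r < 1 on a T_{eps,lambda}-neighbourhood of 0.  Such a
   neighbourhood only constrains a set of probability > 1 - lambda, and on a
   nonatomic space every set {|f x| >= 1/(n+1)} of positive probability
   contains a subset A of probability < lambda.  Then (n+1) 1_A x lies in the
   neighbourhood although |f ((n+1) 1_A x)| >= 1 on A; hence |f x| < 1/(n+1)
   a.s. for every n. *)

Section ScalarNorm.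
Context (R : realType).

Lemma KnormC (z : R[i]) : @Knorm R KComplex z = Normc.normc z.
Proof. by case: z. Qed.

Lemma Knorm0 k : Knorm (0 : Kt R k) = 0.
Proof. case: k; first exact: normr0. by rewrite (KnormC 0) Normc.normc0. Qed.

Lemma KnormD k (a b : Kt R k) : Knorm (a + b) <= Knorm a + Knorm b.
Proof.
case: k a b => a b; first exact: ler_normD.
by rewrite !KnormC; exact: le_normcD.
Qed.

Lemma KnormMn k (a : Kt R k) n : Knorm (a *+ n) = Knorm a *+ n.
Proof.
case: k a => a; first exact: normrMn.
by rewrite !KnormC; exact: normcMn.
Qed.

Lemma Knorm_gt0 k (a : Kt R k) : a != 0 -> 0 < Knorm a.
Proof.
case: k a => a; first by rewrite normr_gt0.
move=> a0; rewrite KnormC lt_def; apply/andP; split.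
  by apply/eqP => /Normc.eq0_normc; apply/eqP.
by case: a {a0} => x y /=; exact: sqrtr_ge0.
Qed.

Lemma Knorm_lt_inv_eq0 k (a : Kt R k) : (forall n, Knorm a < n.+1%:R^-1) -> a = 0.
Proof.
move=> small; apply/eqP; apply: contraT => a0.
have [N _ /(_ N (leqnn N))] := near_infty_natSinv_lt (PosNum (Knorm_gt0 a0)).
by move=> /= /lt_trans/(_ (small N)); rewrite ltxx.
Qed.

End ScalarNorm.

Section ScalarMeasurability.
Context (R : realType) (d : measure_display) (T : measurableType d) (k : scalarK).

Lemma Kmeas_add (f g : T -> Kt R k) : Kmeas f -> Kmeas g ->
  Kmeas (fun w => f w + g w).
Proof.
case: k f g => /= f g; first exact: measurable_funD.
move=> [mf1 mf2] [mg1 mg2]; split.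
- have -> : (fun w => complex.Re (f w + g w)) =
            (fun w => complex.Re (f w)) \+ (fun w => complex.Re (g w)).
    by apply/funext => w /=; case: (f w) => ? ?; case: (g w).
  exact: measurable_funD.
- have -> : (fun w => complex.Im (f w + g w)) =
            (fun w => complex.Im (f w)) \+ (fun w => complex.Im (g w)).
    by apply/funext => w /=; case: (f w) => ? ?; case: (g w).
  exact: measurable_funD.
Qed.

Lemma measurable_Knorm (f : T -> Kt R k) : Kmeas f ->
  measurable_fun setT (fun w => Knorm (f w)).
Proof.
case: k f => /= f; first exact: measurableT_comp.
move=> [mRe mIm].
have -> : (fun w => @Knorm R KComplex (f w)) =
    (fun w => Num.sqrt (complex.Re (f w) ^+ 2 + complex.Im (f w) ^+ 2)).
  by apply/funext => w; rewrite KnormC; case: (f w).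
apply: measurableT_comp; first exact: continuous_measurable_fun (@sqrt_continuous R).
by apply: measurable_funD; apply: measurable_funX.
Qed.

Lemma Kmeas_indicator (A : set T) (c : Kt R k) : measurable A ->
  exists xi : T -> Kt R k,
    [/\ Kmeas xi, (forall w, A w -> xi w = c) & (forall w, ~ A w -> xi w = 0)].
Proof.
move=> mA; case: k c => /= c.
  exists (fun w => \1_A w * c); split.
  - by apply: measurable_funM => //; exact: measurable_indic.
  - by move=> w Aw; rewrite indicE mem_set // mul1r.
  - by move=> w nAw; rewrite indicE memNset // mul0r.
exists (fun w => @Complex R (\1_A w * complex.Re c) (\1_A w * complex.Im c)); split.
- by split => /=; apply: measurable_funM => //; exact: measurable_indic.
- by move=> w Aw; rewrite indicE mem_set // !mul1r; case: c.
- by move=> w nAw; rewrite indicE memNset // !mul0r.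
Qed.

End ScalarMeasurability.

Section ProbabilityFacts.
Context (R : realType) (d : measure_display) (T : measurableType d)
        (P : probability T R).

Lemma measure_neq0_EFin (C : set T) : measurable C -> P C <> 0%E ->
  exists2 a : R, P C = a%:E & 0 < a.
Proof.
move=> mC PC0; exists (fine (P C)); first by rewrite fineK // fin_num_measure.
rewrite lt_def fine_ge0 ?measure_ge0 // andbT.
by rewrite fine_eq0 ?fin_num_measure //; exact/eqP.
Qed.

Lemma ae_in_seq (X : Type) (s : seq X) (Q : X -> T -> Prop) :
  (forall p, List.In p s -> {ae P, forall w, Q p w}) ->
  {ae P, forall w, forall p, List.In p s -> Q p w}.
Proof.
elim: s => [|q s IHs] aeQ; first by apply: aeW => w p [].
apply: filterS2 (aeQ q (or_introl erefl)) (IHs (fun p sp => aeQ p (or_intror sp))).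
by move=> w Qq Qs p [<-|sp] //; exact: Qs.
Qed.

Lemma prob_gt_of_ae_compl (A S : set T) (lam : R) :
  measurable A -> measurable S -> {ae P, forall w, ~ A w -> S w} ->
  (P A < lam%:E)%E -> ((1 - lam)%:E < P S)%E.
Proof.
move=> mA mS [N [mN PN0 notSN]] PA_lt.
have PAC_le : (P (~` A) <= P S)%E.
  rewrite -[P S]adde0 -PN0; apply: le_trans (measureU2 _ mS mN).
  apply: le_measure; rewrite ?inE; [exact: measurableC | exact: measurableU |].
  move=> w nAw; have [Sw|nSw] := pselect (S w); first by left.
  by right; apply: notSN => /(_ nAw).
apply: lt_le_trans PAC_le; rewrite probability_setC //.
move: PA_lt; rewrite -(fineK (fin_num_measure P A mA)) -EFinB !lte_fin.
by move=> ?; lra.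
Qed.

End ProbabilityFacts.

Section Nonatomic.
Context (R : realType) (d : measure_display) (T : measurableType d)
        (P : probability T R).
Hypothesis P_nonatomic : nonatomic P.

Lemma nonatomic_halve (A : set T) : measurable A -> (0 < P A)%E ->
  exists C, [/\ measurable C, C `<=` A, (0 < P C)%E & (P C <= P A * (2^-1)%:E)%E].
Proof.
move=> mA PA0.
have [C [mC CA PC0 PAC0]] :
    exists C, [/\ measurable C, C `<=` A, P C <> 0%E & P (A `\` C) <> 0%E].
  apply: contrapT => noC; apply: P_nonatomic; exists A; split => // C mC CA.
  have [->|PC0] := eqVneq (P C) 0%E; [by left | right].
  by apply: contrapT => PAC0; apply: noC; exists C; split => //; exact/eqP.
have mAC : measurable (A `\` C) by exact: measurableD.
have PA_split : P A = (P (A `\` C) + P C)%E.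
  by rewrite (measureDI P mA mC) (setIidr CA).
have [a PCa a0] := measure_neq0_EFin mC PC0.
have [b PACb b0] := measure_neq0_EFin mAC PAC0.
rewrite PA_split PCa PACb -EFinD -EFinM.
have [le_ab|lt_ba] := leP a b.
- by exists C; split; rewrite ?PCa ?lte_fin ?lee_fin //; lra.
- by exists (A `\` C); split; rewrite ?PACb ?lte_fin ?lee_fin //; lra.
Qed.

Lemma nonatomic_small_subset (B : set T) (lam : R) :
  measurable B -> (0 < P B)%E -> 0 < lam ->
  exists A, [/\ measurable A, A `<=` B, (0 < P A)%E & (P A < lam%:E)%E].
Proof.
move=> mB PB0 lam0.
have halves m : exists A,
    [/\ measurable A, A `<=` B, (0 < P A)%E & (P A <= ((2^-1) ^+ m)%:E)%E].
  elim: m => [|m [A [mA AB PA0 PAm]]].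
    by exists B; split => //; rewrite expr0; exact: probability_le1.
  have [C [mC CA PC0 PCA]] := nonatomic_halve mA PA0.
  exists C; split => //; first exact: subset_trans CA AB.
  rewrite exprSr EFinM (le_trans PCA) // lee_wpmul2r // lee_fin invr_ge0.
have [N _ /(_ N (leqnn N))] := near_infty_natSinv_expn_lt (PosNum lam0).
rewrite /= div1r -exprVn => halfN_lt.
have [A [mA AB PA0 PAN]] := halves N.
by exists A; split => //; apply: le_lt_trans PAN _; rewrite lte_fin.
Qed.

End Nonatomic.

Section FiniteSeminormFamily.
Context (R : realType) (d : measure_display) (T : measurableType d)
        (P : probability T R) (k : scalarK) (E : zmodType)
        (act : (T -> Kt R k) -> E -> E).

Lemma normQ_eq0 (Q : seq (E -> T -> R)) y w :
  (forall p, List.In p Q -> p y w = 0) -> normQ Q y w = 0.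
Proof.
elim: Q => [|q Q IHQ] Q0; first by rewrite /normQ big_nil.
rewrite /normQ big_cons -/(normQ Q y w) IHQ; last by move=> p Qp; apply: Q0; right.
by rewrite Q0; [exact: maxxx | left].
Qed.

Lemma measurable_normQ (Q : seq (E -> T -> R)) y :
  (forall p, List.In p Q -> measurable_fun setT (p y)) ->
  measurable_fun setT (normQ Q y).
Proof.
elim: Q => [|q Q IHQ] mQ.
  have -> : normQ (T:=T) [::] y = cst (0 : R).
    by apply: funext => w; rewrite /normQ big_nil.
  exact: measurable_cst.
have -> : normQ (T:=T) (q :: Q) y = q y \max normQ Q y.
  by apply: funext => w; rewrite /normQ big_cons.
apply: measurable_maxr; first by apply: mQ; left.
by apply: IHQ => p Qp; apply: mQ; right.
Qed.

Lemma prob_normQ_act_lt (Q : seq (E -> T -> R)) (eps lam : R) (A : set T) xi x :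
  (forall p, List.In p Q -> L0_seminorm P act p) -> 0 < eps ->
  measurable A -> (P A < lam%:E)%E ->
  Kmeas xi -> (forall w, ~ A w -> xi w = 0) ->
  ((1 - lam)%:E < P [set w | (normQ Q (act xi x) w < eps)%R])%E.
Proof.
move=> Qsemi eps0 mA PA_lt mxi xi0.
apply: prob_gt_of_ae_compl PA_lt => //.
  have -> : [set w | (normQ Q (act xi x) w < eps)%R] =
            normQ Q (act xi x) @^-1` `]-oo, eps[.
    by apply/seteqP; split => w; rewrite /= in_itv.
  rewrite -[X in measurable X]setTI; apply: measurable_normQ => //.
  by move=> p Qp; case: (Qsemi p Qp).
have homQ : {ae P, forall w, forall p, List.In p Q ->
    p (act xi x) w = Knorm (xi w) * p x w}.
  by apply: ae_in_seq => p Qp; case: (Qsemi p Qp) => _ _ _; exact.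
apply: filterS homQ => w homw nAw /=.
by rewrite normQ_eq0 // => p Qp; rewrite homw // xi0 // Knorm0 mul0r.
Qed.

End FiniteSeminormFamily.

Definition ess_unit_ball (R : realType) (d : measure_display) (T : measurableType d)
    (P : probability T R) (k : scalarK) : set (T -> Kt R k) :=
  [set xi | Kmeas xi /\ exists2 r : R, r < 1 & {ae P, forall w, Knorm (xi w) <= r}].
Arguments ess_unit_ball {R d T} P k.

Lemma Tc_open_ess_unit_ball (R : realType) (d : measure_display) (T : measurableType d)
    (P : probability T R) (k : scalarK) : Tc_open_L0 P (ess_unit_ball P k).
Proof.
move=> xi [mxi [r r1 xi_le]]; split => //.
exists (cst ((1 - r) / 2)); split; first exact: measurable_cst.
  by apply: aeW => w /=; lra.
move=> eta meta eta_le; split; first exact: Kmeas_add.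
exists (r + (1 - r) / 2); first lra.
apply: filterS2 xi_le eta_le => w xi_w eta_w.
by apply: le_trans (KnormD _ _) _; exact: lerD.
Qed.

Section MinimalDual.
Context (R : realType) (d : measure_display) (T : measurableType d)
        (P : probability T R) (k : scalarK) (E : zmodType)
        (act : (T -> Kt R k) -> E -> E) (Pfam : set (E -> T -> R))
        (f : E -> T -> Kt R k).
Hypotheses (P_nonatomic : nonatomic P)
           (Pfam_seminorm : forall p, Pfam p -> L0_seminorm P act p)
           (f_hom : L0_module_hom P act f)
           (f_cont : cont_epslam_Tc P Pfam f).

Lemma L0_module_hom0 : {ae P, forall w, f 0 w = 0}.
Proof.
case: f_hom => _ f_add _; apply: filterS (f_add 0 0) => w.
by rewrite addr0 => /(congr1 (fun z => z - f 0 w)); rewrite /= subrr addrK.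
Qed.

Lemma hom_ess_bounded_near0 : exists Q (eps lam : R),
  [/\ forall p, List.In p Q -> L0_seminorm P act p, 0 < eps, 0 < lam &
      forall y, ((1 - lam)%:E < P [set w | (normQ Q y w < eps)%R])%E ->
        ess_unit_ball P k (f y)].
Proof.
have f0_ball : ess_unit_ball P k (f 0).
  split; first by case: f_hom.
  exists 0; first lra.
  by apply: filterS L0_module_hom0 => w ->; rewrite Knorm0.
have [Q [eps [lam [_ QP eps0 /andP[lam0 _] nbhs]]]] :=
  f_cont (@Tc_open_ess_unit_ball _ _ _ P k) f0_ball.
exists Q, eps, lam; split => // [p Qp|y /nbhs]; first exact/Pfam_seminorm/QP.
by rewrite add0r.
Qed.

Lemma ae_Knorm_hom_lt_inv x n : {ae P, forall w, Knorm (f x w) < n.+1%:R^-1}.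
Proof.
have [fmeas _ f_act] := f_hom.
have [Q [eps [lam [Qsemi eps0 lam0 nbhs]]]] := hom_ess_bounded_near0.
pose B := [set w | n.+1%:R^-1 <= Knorm (f x w)].
have mB : measurable B.
  have -> : B = (fun w => Knorm (f x w)) @^-1` `[n.+1%:R^-1, +oo[.
    by apply/seteqP; split => w; rewrite /= in_itv /= andbT.
  by rewrite -[X in measurable X]setTI; exact: measurable_Knorm.
apply: (@negligibleS _ _ _ _ B) => [w /negP|]; first by rewrite -leNgt.
apply/negligibleP => //; apply: contrapT => PB0.
have PB_gt0 : (0 < P B)%E by rewrite lt_def measure_ge0 andbT; exact/eqP.
have [A [mA AB PA0 PA_lt]] := nonatomic_small_subset P_nonatomic mB PB_gt0 lam0.
have [xi [mxi xiA xi0]] := Kmeas_indicator (n.+1%:R : Kt R k) mA.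
have [_ [r r1 fy_le]] := nbhs _ (prob_normQ_act_lt x Qsemi eps0 mA PA_lt mxi xi0).
suff : P.-negligible A by move/(negligibleP _ mA) => PA; rewrite PA ltxx in PA0.
have : {ae P, forall w,
    Knorm (f (act xi x) w) <= r /\ f (act xi x) w = xi w * f x w}.
  by apply: filterS2 fy_le (f_act xi x mxi) => w; split.
move=> [N [mN PN0 NN]]; exists N; split => // w Aw; apply: NN => /= -[fy_w fy_eq].
move: fy_w; rewrite fy_eq xiA // mulr_natl KnormMn => fy_w.
have : 1 <= Knorm (f x w) *+ n.+1.
  by rewrite -[1](@mulVf _ n.+1%:R) ?pnatr_eq0 // mulr_natr lerMn2r AB.
by move=> /le_trans/(_ fy_w); rewrite leNgt r1.
Qed.

End MinimalDual.

Theorem theorem1p2 (R : realType) (d : measure_display) (T : measurableType d)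
    (P : probability T R) (k : scalarK) (E : zmodType)
    (act : (T -> Kt R k) -> E -> E) (Pfam : set (E -> T -> R))
    (f : E -> T -> Kt R k) :
  nonatomic P ->
  RLC_module P act Pfam ->
  L0_module_hom P act f ->
  cont_epslam_Tc P Pfam f ->
  forall x : E, {ae P, forall w, f x w = 0}.
Proof.
move=> P_nonatomic [_ Pfam_seminorm _] f_hom f_cont x.
have small n := ae_Knorm_hom_lt_inv P_nonatomic Pfam_seminorm f_hom f_cont x n.
by apply: filterS (ae_foralln small) => w; exact: Knorm_lt_inv_eq0.
Qed.
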